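(* Consider the problem $\min_{x\in\mathbb R^n} f(x)$ subject to $Ax=b$, where $f:\mathbb R^n\to\mathbb R$ is convex and continuously differentiable, $A\in\mathbb R^{m\times n}$, $b\in\mathbb R^m$, and assume the KKT set $\Omega$ is nonempty. Let $\{(x_k,\lambda_k)\}_{k\ge0}$ be generated by the accelerated augmented Lagrangian method described in the context (in either Case I or Case II), and fix $(x^*,\lambda^* )\in\Omega$. Then: (i) $(\eta-\rho)\sum_{k=1}^{+\infty} t_{k+1}\big(\mathcal L_\beta(x_k,\lambda^* )-\mathcal L_\beta(x^*,\lambda^* )\big)<+\infty$ and $(1-\eta)\sum_{k=1}^{+\infty} t_{k+1}\|(x_{k+1},\lambda_{k+1})-(x_k,\lambda_k)\|_M^2<+\infty$. (ii) For all $k\ge1$, $\mathcal L_\beta(x_k,\lambda^* )-\mathcal L_\beta(x^*,\lambda^* )\le \mathcal E_1/t_k^2$, where $\mathcal E_1=\mathcal L_\beta(x_1,\lambda^* )-\mathcal L_\beta(x^*,\lambda^* )+\frac{\eta}{2\gamma}\|x_1-x^*\|^2+\frac{\eta}{2\delta}\|\lambda_1-\lambda^*\|^2$. (iii) The sequence $\{(x_k,\lambda_k)\}_{k\ge0}$ is bounded, and for all $k>1$, $\|(x_k,\lambda_k)-(x_{k-1},\lambda_{k-1})\|_M\le \frac{2\sqrt{2\mathcal E_1}}{t_k-1}$. (iv) There exists a constant $C>0$ such that for all $k\ge1$, $\|Ax_k-b\|\le C/t_k^2$ and $|f(x_k)-f(x^* )|\le \big(\mathcal E_1+\|\lambda^*\|C+\beta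 C^2/2\big)/t_k^2$.
   Context: The KKT set is $\Omega=\{(x^*,\lambda^* )\in\mathbb R^n\times\mathbb R^m: Ax^*=b,\ \nabla f(x^* )+A^\top\lambda^*=0\}$. For $\beta\ge0$, the augmented Lagrangian is $\mathcal L_\beta(x,\lambda)=f(x)+\langle\lambda,Ax-b\rangle+\frac\beta2\|Ax-b\|^2$. For $\gamma,\delta>0$ and $z=(x,\lambda)$, $\|z\|_M^2=\frac1\gamma\|x\|^2+\frac1\delta\|\lambda\|^2$ (i.e. $M=\mathrm{diag}(\gamma^{-1}I_n,\delta^{-1}I_m)$). Parameter sequence: $\{t_k\}_{k\ge1}$ is nondecreasing, $t_1=1$, $t_k>1$ for all $k>2$, $t_k\to+\infty$, and $t_{k+1}^2-t_k^2\le\rho t_{k+1}$ for all $k\ge 1$, with fixed $\rho\in(0,1]$. Fix $\eta\in[\rho,1]$, $\gamma>0$, $\delta>0$, $\beta\ge0$. Algorithm: initial points $x_0=x_1\in\mathbb R^n$, $\lambda_0=\lambda_1\in\mathbb R^m$. For $k=1,2,\dots$: set $\alpha_k=(t_{k+1}-\eta)/\eta$, $c_k=t_{k+1}/\eta$, $\bar x_k=x_k+\frac{t_k-1}{t_{k+1}}(x_k-x_{k-1})$, $\bar\lambda_k=\lambda_k+\frac{t_k-1}{t_{k+1}}(\lambda_k-\lambda_{k-1})$, $p_k=c_k\bar\lambda_k-\alpha_k\lambda_k$, $r_k=\alpha_kAx_k+b$. Case I ($f$ convex and $C^1$): $x_{k+1}=\arg\min_{x}\{f(x)+\frac\beta2\|Ax-b\|^2+\frac1{2\gamma}\|x-\bar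 x_k\|^2+\langle p_k,Ax-b\rangle+\frac\delta2\|c_kAx-r_k\|^2\}$. Case II ($f$ convex with $L$-Lipschitz gradient, and $\gamma\le 1/L$): $x_{k+1}=\arg\min_{x}\{\langle\nabla f(\bar x_k),x\rangle+\frac\beta2\|Ax-b\|^2+\frac1{2\gamma}\|x-\bar x_k\|^2+\langle p_k,Ax-b\rangle+\frac\delta2\|c_kAx-r_k\|^2\}$. Then $\lambda_{k+1}=\bar\lambda_k+\delta(c_kAx_{k+1}-r_k)$. *)

From HB Require Import structures.
From mathcomp Require Import all_boot all_order all_algebra.
From mathcomp Require Import all_classical all_reals all_analysis.
Set Implicit Arguments. Unset Strict Implicit. Unset Printing Implicit Defensive.
Import Order.TTheory GRing.Theory Num.Theory.
Import numFieldNormedType.Exports.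
Local Open Scope ring_scope.

Section Defs.
Variable R : realType.

Definition dot (n : nat) (u v : 'cV[R]_n) : R := \sum_(i < n) u i 0 * v i 0.
Definition enorm (n : nat) (u : 'cV[R]_n) : R := Num.sqrt (dot u u).

Definition convex_fn (n : nat) (f : 'cV[R]_n -> R) : Prop :=
  forall (x y : 'cV[R]_n) (th : R), 0 <= th <= 1 ->
    f (th *: x + (1 - th) *: y) <= th * f x + (1 - th) * f y.

Definition is_gradient (n : nat) (f : 'cV[R]_n -> R) (gf : 'cV[R]_n -> 'cV[R]_n) : Prop :=
  forall x : 'cV[R]_n, differentiable f x /\ forall h, 'd f x h = dot (gf x) h.

Definition augLag (m n : nat) (f : 'cV[R]_n -> R) (A : 'M[R]_(m, n)) (b : 'cV[R]_m)
    (beta : R) (x : 'cV[R]_n) (lam : 'cV[R]_m) : R :=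
  f x + dot lam (A *m x - b) + beta / 2 * enorm (A *m x - b) ^+ 2.

(* ||(x, lam)||_M with M = diag(gamma^-1 I_n, delta^-1 I_m) *)
Definition Mnorm (m n : nat) (gamma delta : R) (x : 'cV[R]_n) (lam : 'cV[R]_m) : R :=
  Num.sqrt (enorm x ^+ 2 / gamma + enorm lam ^+ 2 / delta).

Definition alpha_k (t : nat -> R) (eta : R) (k : nat) : R := (t k.+1 - eta) / eta.
Definition c_k (t : nat -> R) (eta : R) (k : nat) : R := t k.+1 / eta.
Definition extrap (p : nat) (t : nat -> R) (z : nat -> 'cV[R]_p) (k : nat) : 'cV[R]_p :=
  z k + ((t k - 1) / t k.+1) *: (z k - z k.-1).
Definition p_k (m : nat) (t : nat -> R) (eta : R) (lam : nat -> 'cV[R]_m) (k : nat) :=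
  c_k t eta k *: extrap t lam k - alpha_k t eta k *: lam k.
Definition r_k (m n : nat) (A : 'M[R]_(m, n)) (b : 'cV[R]_m) (t : nat -> R) (eta : R)
    (x : nat -> 'cV[R]_n) (k : nat) : 'cV[R]_m :=
  alpha_k t eta k *: (A *m x k) + b.

Definition sub_common (m n : nat) (A : 'M[R]_(m, n)) (b : 'cV[R]_m)
    (t : nat -> R) (eta gamma delta beta : R)
    (x : nat -> 'cV[R]_n) (lam : nat -> 'cV[R]_m) (k : nat) (y : 'cV[R]_n) : R :=
  beta / 2 * enorm (A *m y - b) ^+ 2
  + 1 / (2 * gamma) * enorm (y - extrap t x k) ^+ 2
  + dot (p_k t eta lam k) (A *m y - b)
  + delta / 2 * enorm (c_k t eta k *: (A *m y) - r_k A b t eta x k) ^+ 2.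

Definition objI (m n : nat) (f : 'cV[R]_n -> R) (A : 'M[R]_(m, n)) (b : 'cV[R]_m)
    (t : nat -> R) (eta gamma delta beta : R)
    (x : nat -> 'cV[R]_n) (lam : nat -> 'cV[R]_m) (k : nat) (y : 'cV[R]_n) : R :=
  f y + sub_common A b t eta gamma delta beta x lam k y.

Definition objII (m n : nat) (gf : 'cV[R]_n -> 'cV[R]_n) (A : 'M[R]_(m, n)) (b : 'cV[R]_m)
    (t : nat -> R) (eta gamma delta beta : R)
    (x : nat -> 'cV[R]_n) (lam : nat -> 'cV[R]_m) (k : nat) (y : 'cV[R]_n) : R :=
  dot (gf (extrap t x k)) y + sub_common A b t eta gamma delta beta x lam k y.

End Defs.

From HB Require Import structures.
From mathcomp Require Import all_boot all_order all_algebra.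
From mathcomp Require Import all_classical all_reals all_analysis.
From mathcomp Require Import ring lra.
Import Order.TTheory GRing.Theory Num.Theory.
Import numFieldNormedType.Exports.
Set Implicit Arguments. Unset Strict Implicit. Unset Printing Implicit Defensive.
Local Open Scope classical_set_scope.
Local Open Scope ring_scope.

(* The x-update yields, in both cases, the proximal inequality
     f(x_{k+1}) <= f(y) + <g_k, y - x_{k+1}> + |x_{k+1} - xbar_k|^2 / (2 gamma)   for all y,
   where g_k is the gradient at x_{k+1} of the smooth part of the subproblem: by minimality
   and convexity in Case I, by the descent lemma and gamma <= 1/L in Case II.  Write
   z = (x, lambda), zs = (xs, ls) and D_k = L(x_k, ls) - L(xs, ls) >= 0.  Together with the
   lambda-update, the proximal inequality makes the energy
     E_k = t_k^2 D_k + 1/2 |eta (z_k - zs) + (t_k - 1) (z_k - z_{k-1})|_M^2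
           + eta (1 - eta) / 2 |z_k - zs|_M^2
   drop by at least (eta - rho) t_{k+1} D_k + (1 - eta) / 2 t_{k+1} |z_{k+1} - z_k|_M^2:
   an exact identity writes the drop as a sum of nonnegative terms.  E_1 is the constant
   of the theorem, so this gives (i) and (ii); the momentum term of E_k bounds the
   increments, and an averaging recursion for |z_k - zs|_M^2 bounds the iterates.  Finally
   the lambda-update shows that t_k^2 (A x_k - b) - (eta / delta) Psi_k, with Psi_k bounded,
   evolves by convex combinations with -(eta / delta) Psi_k; this gives the O(1/t_k^2)
   feasibility bound, and the objective bound follows from it and (ii). *)

Section InnerProduct.
Variables (R : realType) (n : nat).
Implicit Types (a : R) (u v w : 'cV[R]_n).

Lemma dotC u v : dot u v = dot v u.
Proof. by apply: eq_bigr => i _; rewrite mulrC. Qed.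

Lemma dotDl u v w : dot (u + v) w = dot u w + dot v w.
Proof. by rewrite /dot -big_split; apply: eq_bigr => i _; rewrite !mxE mulrDl. Qed.

Lemma dotNl u w : dot (- u) w = - dot u w.
Proof. by rewrite /dot -sumrN; apply: eq_bigr => i _; rewrite !mxE mulNr. Qed.

Lemma dotZl a u w : dot (a *: u) w = a * dot u w.
Proof. by rewrite /dot mulr_sumr; apply: eq_bigr => i _; rewrite !mxE mulrA. Qed.

Lemma dotDr u v w : dot w (u + v) = dot w u + dot w v.
Proof. by rewrite dotC dotDl !(dotC w). Qed.

Lemma dotNr u w : dot w (- u) = - dot w u.
Proof. by rewrite dotC dotNl dotC. Qed.

Lemma dotZr a u w : dot w (a *: u) = a * dot w u.
Proof. by rewrite dotC dotZl dotC. Qed.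

Lemma dotZZ a u : dot (a *: u) (a *: u) = a ^+ 2 * dot u u.
Proof. by rewrite dotZl dotZr mulrA -expr2. Qed.

Lemma dot0r u : dot u 0 = 0.
Proof. by rewrite /dot big1 // => i _; rewrite mxE mulr0. Qed.

Lemma dot_ge0 u : 0 <= dot u u.
Proof. by apply: sumr_ge0 => i _; rewrite -expr2 sqr_ge0. Qed.

Lemma enorm_ge0 u : 0 <= enorm u.
Proof. exact: sqrtr_ge0. Qed.

Lemma enorm_sqr u : enorm u ^+ 2 = dot u u.
Proof. by rewrite sqr_sqrtr // dot_ge0. Qed.

Lemma enormN u : enorm (- u) = enorm u.
Proof. by rewrite /enorm dotNl dotNr opprK. Qed.

Lemma enormZ a u : enorm (a *: u) = `|a| * enorm u.
Proof. by rewrite /enorm dotZl dotZr mulrA -expr2 sqrtrM ?sqr_ge0 // sqrtr_sqr. Qed.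

Lemma enorm_le1D u : enorm u <= 1 + dot u u.
Proof. by rewrite -enorm_sqr; have := enorm_ge0 u; nra. Qed.

Lemma dot_self_eq0 u v : dot u u = 0 -> dot u v = 0.
Proof.
move=> u0; rewrite /dot big1 // => i _.
have : u i 0 * u i 0 = 0 by apply: (psumr_eq0P _ u0) => // j _; rewrite -expr2 sqr_ge0.
by move/eqP; rewrite mulf_eq0 orbb => /eqP ->; rewrite mul0r.
Qed.

Lemma dot_le_enorm u v : dot u v <= enorm u * enorm v.
Proof.
have [u0|u0] := eqVneq (enorm u) 0.
  have uu0 : dot u u = 0 by rewrite -enorm_sqr u0 expr0n.
  by rewrite dot_self_eq0 // u0 mul0r.
have [v0|v0] := eqVneq (enorm v) 0.
  have vv0 : dot v v = 0 by rewrite -enorm_sqr v0 expr0n.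
  by rewrite dotC dot_self_eq0 // v0 mulr0.
have a0 : 0 < enorm u by rewrite lt0r u0 enorm_ge0.
have c0 : 0 < enorm v by rewrite lt0r v0 enorm_ge0.
have := dot_ge0 (enorm v *: u - enorm u *: v).
rewrite !(dotDl, dotDr, dotNl, dotNr, dotZl, dotZr) (dotC v u) -!enorm_sqr.
move: (enorm u) (enorm v) (dot u v) a0 c0 => a c d a0 c0 H.
have : 0 <= 2 * a * c * (a * c - d) by nra.
by rewrite pmulr_rge0 ?subr_ge0 // !mulr_gt0.
Qed.

End InnerProduct.

Section MatrixAdjoint.
Variables (R : realType) (m n : nat).

Lemma dot_mulmx (A : 'M[R]_(m, n)) u v : dot u (A *m v) = dot (A^T *m u) v.
Proof.
rewrite /dot; under eq_bigr => i _ do rewrite mxE big_distrr /=.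
rewrite exchange_big /=; apply: eq_bigr => j _.
rewrite mxE big_distrl /=; apply: eq_bigr => i _.
by rewrite mxE mulrCA mulrA.
Qed.

End MatrixAdjoint.

Ltac dot_expand := repeat progress (rewrite ?(mulmxDr, mulmxN) -?scalemxAr
   ?(dotDl, dotDr, dotNl, dotNr, dotZl, dotZr)).
(* Orient every pair [dot u v], [dot v u] the same way, so that [ring] sees a single atom. *)
Ltac dot_sort := repeat match goal with |- context [dot ?u ?v] =>
   match goal with |- context [dot v u] => progress rewrite (dotC v u) end end.

Section InnerProductBounds.
Variables (R : realType) (n : nat).
Implicit Types (u w : 'cV[R]_n).

Lemma dotDD_le u w : dot (u + w) (u + w) <= 2 * dot u u + 2 * dot w w.
Proof. by have := dot_ge0 (u - w); dot_expand; dot_sort; lra. Qed.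

Lemma dot_le_dotB u w : dot u u <= 2 * dot (u - w) (u - w) + 2 * dot w w.
Proof. by have := dotDD_le (u - w) w; rewrite subrK. Qed.

Lemma dot_convex (th : R) u w : 0 <= th <= 1 ->
  dot (th *: u + (1 - th) *: w) (th *: u + (1 - th) *: w)
  <= th * dot u u + (1 - th) * dot w w.
Proof.
case/andP=> th0 th1; have : 0 <= th * (1 - th) * dot (u - w) (u - w).
  by rewrite mulr_ge0 ?dot_ge0 // mulr_ge0 // subr_ge0.
by dot_expand; dot_sort; lra.
Qed.

End InnerProductBounds.

Section Gradient.
Variables (R : realType) (n : nat) (f : 'cV[R]_n -> R) (gf : 'cV[R]_n -> 'cV[R]_n).
Hypothesis f_grad : is_gradient f gf.

Lemma is_derive_line (x h : 'cV[R]_n) (s : R) :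
  is_derive s (1 : R) (fun th : R => f (x + th *: h)) (dot (gf (x + s *: h)) h).
Proof.
have [dif dfE] := f_grad (x + s *: h).
have der : derivable f (x + s *: h) h := diff_derivable dif.
have E : (fun e : R => e^-1 *: (((fun th : R => f (x + th *: h)) \o shift s) (e *: 1)
            - f (x + s *: h)))
    = (fun e : R => e^-1 *: ((f \o shift (x + s *: h)) (e *: h) - f (x + s *: h))).
  apply: funext => e /=; congr (_ *: (f _ - _)).
  by rewrite -[e *: 1]/(e * 1) mulr1 scalerDl addrCA addrC.
apply: DeriveDef; first by rewrite /derivable E.
by rewrite /derive E -[lim _]/('D_h f (x + s *: h)) deriveE // dfE.
Qed.

Lemma convex_grad_ineq (x y : 'cV[R]_n) : convex_fn f ->
  f x + dot (gf x) (y - x) <= f y.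
Proof.
move=> f_cvx; have [dif dfE] := f_grad x; set h := y - x.
have der : derivable f x h := diff_derivable dif.
have incl : (0 : R)^'+ `=>` (0 : R)^'.
  by apply: within_subset => u /= u0; rewrite gt_eqF.
have slope_cvg := cvg_trans (cvg_app _ incl) der.
have : 'D_h f x <= f y - f x.
  apply: (closed_cvg _ (@closed_le R (f y - f x)) _ _ slope_cvg).
  near=> e.
  have e0 : 0 < e by near: e; exact: nbhs_right_gt.
  have e1 : e < 1 by near: e; apply: nbhs_right_lt; exact: ltr01.
  have E : e *: h + x = e *: y + (1 - e) *: x.
    by rewrite /h; apply/matrixP => i j; rewrite !mxE; ring.
  have := f_cvx y x e; rewrite (ltW e0) (ltW e1) /= -E => /(_ isT) cvx.
  by rewrite /= -[_ *: (_ : R)]/(_ * _) mulrC ler_pdivrMr //; lra.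
by rewrite deriveE // dfE; lra.
Unshelve. all: end_near.
Qed.

Lemma descent_ineq (L : R) (x y : 'cV[R]_n) : 0 <= L ->
  (forall u v, enorm (gf u - gf v) <= L * enorm (u - v)) ->
  f y <= f x + dot (gf x) (y - x) + L / 2 * dot (y - x) (y - x).
Proof.
move=> L0 gf_lip.
set h := y - x; set d := dot (gf x) h; set c := L / 2 * dot h h.
pose psi := (fun th => f (x + th *: h)) - (cst d * id + cst c * (id * id)).
pose dpsi th := dot (gf (x + th *: h)) h - (d + c * (th + th)).
have psi_der th : is_derive th (1 : R) psi (dpsi th).
  apply: is_derive_eq; first by apply: is_deriveB; exact: is_derive_line.
  congr (_ - _); rewrite /cst /=.
  have scaleE (a e : R) : a *: e = a * e by [].
  by rewrite !scaleE; ring.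
have psi_cont : {within `[0, 1], continuous psi}.
  by apply: derivable_within_continuous => th _; case: (psi_der th).
have [s s01 mvt] := MVT_segment (@ler01 R) (fun th _ => psi_der th) psi_cont.
have dpsi_le0 : dpsi s <= 0.
  move: s01; rewrite in_itv /= => /andP [s0 s1].
  have : dot (gf (x + s *: h) - gf x) h <= L * s * dot h h.
    apply: le_trans (dot_le_enorm _ _) _.
    have := gf_lip (x + s *: h) x; rewrite addrAC subrr add0r enormZ ger0_norm //.
    rewrite -enorm_sqr expr2 mulrA => lip.
    by apply: ler_wpM2r; [exact: enorm_ge0 | rewrite -mulrA].
  by rewrite /dpsi dotDl dotNl -/d /c; nra.
have : psi 1 - psi 0 <= 0 by rewrite mvt subr0 mulr1.
rewrite /psi !fctE /= scale0r addr0 scale1r.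
have -> : x + h = y by rewrite /h addrC subrK.
by rewrite /c; lra.
Qed.

End Gradient.

Lemma ge0_of_perturbation (R : realType) (V Q : R) :
  (forall th, 0 < th <= 1 -> 0 <= V + th * Q) -> 0 <= V.
Proof.
move=> perturb; rewrite leNgt; apply/negP => V0.
have QV0 : 0 < `|Q| - V by have := normr_ge0 Q; lra.
have th0 : 0 < - V / (`|Q| - V) by rewrite divr_gt0 // oppr_gt0.
have th1 : - V / (`|Q| - V) <= 1 by rewrite ler_pdivrMr // mul1r; have := normr_ge0 Q; lra.
have := perturb _ (introT andP (conj th0 th1)).
have -> : V + - V / (`|Q| - V) * Q = (V * (`|Q| - Q) - V * V) / (`|Q| - V).
  by field; rewrite gt_eqF.
rewrite pmulr_lge0 ?invr_gt0 // subr_ge0.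
have : V * (`|Q| - Q) <= 0 by rewrite nmulr_rle0 // subr_ge0 ler_norm.
by nra.
Qed.

Section Subproblem.
Variables (R : realType) (m n : nat) (f : 'cV[R]_n -> R) (gf : 'cV[R]_n -> 'cV[R]_n)
  (A : 'M[R]_(m, n)) (b : 'cV[R]_m) (t : nat -> R) (eta gamma delta beta : R)
  (x : nat -> 'cV[R]_n) (lam : nat -> 'cV[R]_m) (k : nat).
Hypothesis gamma_gt0 : 0 < gamma.

Local Notation sub := (sub_common A b t eta gamma delta beta x lam k).

Definition sub_lin (y h : 'cV[R]_n) : R :=
  beta * dot (A *m y - b) (A *m h) + 1 / gamma * dot (y - extrap t x k) h
  + dot (p_k t eta lam k) (A *m h)
  + delta * c_k t eta k * dot (c_k t eta k *: (A *m y) - r_k A b t eta x k) (A *m h).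

Definition sub_quad (h : 'cV[R]_n) : R :=
  beta / 2 * dot (A *m h) (A *m h) + 1 / (2 * gamma) * dot h h
  + delta / 2 * c_k t eta k ^+ 2 * dot (A *m h) (A *m h).

Lemma sub_common_expand y h th :
  sub (y + th *: h) = sub y + th * sub_lin y h + th ^+ 2 * sub_quad h.
Proof.
rewrite /sub_common /sub_lin /sub_quad !enorm_sqr.
move: (extrap t x k) (p_k t eta lam k) (r_k A b t eta x k) (c_k t eta k) => e p r c.
by dot_expand; dot_sort; field; rewrite gt_eqF.
Qed.

Definition prox_ineq : Prop := forall y,
  f (x k.+1) <= f y + sub_lin (x k.+1) (y - x k.+1)
                + 1 / (2 * gamma) * dot (x k.+1 - extrap t x k) (x k.+1 - extrap t x k).

Lemma prox_gap_ge0 : 0 <= 1 / (2 * gamma) * dot (x k.+1 - extrap t x k) (x k.+1 - extrap t x k).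
Proof. by rewrite mulr_ge0 ?dot_ge0 // div1r invr_ge0 mulr_ge0 // ltW. Qed.

Lemma prox_ineq_objI : convex_fn f ->
  (forall y, objI f A b t eta gamma delta beta x lam k (x k.+1)
             <= objI f A b t eta gamma delta beta x lam k y) -> prox_ineq.
Proof.
move=> f_cvx x_min y; set h := y - x k.+1.
suff : 0 <= f y - f (x k.+1) + sub_lin (x k.+1) h by have := prox_gap_ge0; lra.
apply: ge0_of_perturbation (sub_quad h) _ => th /andP [th0 th1].
have := x_min (x k.+1 + th *: h); rewrite /objI !sub_common_expand.
have E : th *: y + (1 - th) *: x k.+1 = x k.+1 + th *: h.
  by rewrite /h; apply/matrixP => i j; rewrite !mxE; ring.
have := f_cvx y (x k.+1) th; rewrite (ltW th0) th1 E => /(_ isT) cvx x_le.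
have : 0 <= th * (f y - f (x k.+1) + sub_lin (x k.+1) h + th * sub_quad h) by nra.
by rewrite pmulr_rge0.
Qed.

Lemma prox_ineq_objII (L : R) : convex_fn f -> is_gradient f gf -> 0 < L ->
  (forall u v, enorm (gf u - gf v) <= L * enorm (u - v)) -> gamma <= 1 / L ->
  (forall y, objII gf A b t eta gamma delta beta x lam k (x k.+1)
             <= objII gf A b t eta gamma delta beta x lam k y) -> prox_ineq.
Proof.
move=> f_cvx f_grad L0 gf_lip gammaL x_min y.
set x1 := x k.+1; set h := y - x1; set xb := extrap t x k.
have lin_ge0 : 0 <= dot (gf xb) h + sub_lin x1 h.
  apply: ge0_of_perturbation (sub_quad h) _ => th /andP [th0 th1].
  have := x_min (x1 + th *: h).
  rewrite /objII !sub_common_expand dotDr dotZr -/xb => x_le.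
  have : 0 <= th * (dot (gf xb) h + sub_lin x1 h + th * sub_quad h) by nra.
  by rewrite pmulr_rge0.
have upper := descent_ineq f_grad xb x1 (ltW L0) gf_lip.
have lower := convex_grad_ineq f_grad xb y f_cvx.
have E : dot (gf xb) (x1 - xb) - dot (gf xb) (y - xb) = - dot (gf xb) h.
  by rewrite /h !dotDr !dotNr; ring.
have LD : L / 2 * dot (x1 - xb) (x1 - xb) <= 1 / (2 * gamma) * dot (x1 - xb) (x1 - xb).
  apply: ler_wpM2r; first exact: dot_ge0.
  have : L * gamma <= 1 by have := ler_wpM2l (ltW L0) gammaL; rewrite div1r mulfV ?gt_eqF.
  move=> Lgamma; rewrite -subr_ge0.
  have -> : 1 / (2 * gamma) - L / 2 = (1 - L * gamma) / (2 * gamma).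
    by field; rewrite gt_eqF.
  by rewrite divr_ge0 ?subr_ge0 // mulr_ge0 // ltW.
lra.
Qed.

End Subproblem.

Section MNorm.
Variables (R : realType) (m n : nat) (gamma delta : R).
Hypotheses (gamma_gt0 : 0 < gamma) (delta_gt0 : 0 < delta).
Implicit Types (u : 'cV[R]_n) (v : 'cV[R]_m).

Definition Mnorm2 u v : R := dot u u / gamma + dot v v / delta.

Lemma Mnorm2_ge0 u v : 0 <= Mnorm2 u v.
Proof. by rewrite addr_ge0 // divr_ge0 ?dot_ge0 // ltW. Qed.

Lemma Mnorm_sqr u v : Mnorm gamma delta u v ^+ 2 = Mnorm2 u v.
Proof. by rewrite /Mnorm !enorm_sqr sqr_sqrtr // Mnorm2_ge0. Qed.

Lemma dotl_le_Mnorm2 u v : dot u u <= gamma * Mnorm2 u v.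
Proof.
rewrite mulrC -ler_pdivrMr // /Mnorm2 lerDl.
by rewrite divr_ge0 ?dot_ge0 // ltW.
Qed.

Lemma dotr_le_Mnorm2 u v : dot v v <= delta * Mnorm2 u v.
Proof.
rewrite mulrC -ler_pdivrMr // /Mnorm2 lerDr.
by rewrite divr_ge0 ?dot_ge0 // ltW.
Qed.

Lemma Mnorm2Z (c : R) u v : Mnorm2 (c *: u) (c *: v) = c ^+ 2 * Mnorm2 u v.
Proof. by rewrite /Mnorm2 !dotZZ; ring. Qed.

Lemma Mnorm2B_le (u1 u2 : 'cV[R]_n) (v1 v2 : 'cV[R]_m) :
  Mnorm2 (u1 - u2) (v1 - v2) <= 2 * Mnorm2 u1 v1 + 2 * Mnorm2 u2 v2.
Proof.
have ig : 0 <= gamma^-1 by rewrite invr_ge0 ltW.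
have id : 0 <= delta^-1 by rewrite invr_ge0 ltW.
have := dotDD_le u1 (- u2); have := dotDD_le v1 (- v2); rewrite !dotNl !dotNr !opprK.
move=> /(ler_wpM2r id) v_le /(ler_wpM2r ig) u_le.
by rewrite /Mnorm2; lra.
Qed.

End MNorm.

Section Lyapunov.
Variables (R : realType) (m n : nat) (f : 'cV[R]_n -> R)
  (A : 'M[R]_(m, n)) (b : 'cV[R]_m) (t : nat -> R) (rho eta gamma delta beta : R)
  (x : nat -> 'cV[R]_n) (lam : nat -> 'cV[R]_m) (xs : 'cV[R]_n) (ls : 'cV[R]_m).

Definition gap (y : 'cV[R]_n) : R :=
  f y - f xs + dot ls (A *m y - b) + beta / 2 * dot (A *m y - b) (A *m y - b).

Definition energy (s : R) (xp xc : 'cV[R]_n) (lp lc : 'cV[R]_m) : R :=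
  s ^+ 2 * gap xc
  + 1 / 2 * Mnorm2 gamma delta (eta *: (xc - xs) + (s - 1) *: (xc - xp))
                               (eta *: (lc - ls) + (s - 1) *: (lc - lp))
  + eta * (1 - eta) / 2 * Mnorm2 gamma delta (xc - xs) (lc - ls).

Definition lyap k := energy (t k) (x k.-1) (x k) (lam k.-1) (lam k).

Definition incr k := Mnorm2 gamma delta (x k - x k.-1) (lam k - lam k.-1).

Definition prox_slack k y :=
  f y + sub_lin A b t eta gamma delta beta x lam k (x k.+1) (y - x k.+1)
  + 1 / (2 * gamma) * dot (x k.+1 - extrap t x k) (x k.+1 - extrap t x k) - f (x k.+1).

Hypothesis xs_feas : A *m xs = b.

Lemma augLag_gap y : augLag f A b beta y ls - augLag f A b beta xs ls = gap y.
Proof. by rewrite /augLag /gap xs_feas subrr !enorm_sqr !dot0r; ring. Qed.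

Lemma lyap_identity k : t k.+1 != 0 -> eta != 0 -> gamma != 0 -> delta != 0 ->
  lam k.+1 = extrap t lam k + delta *: (c_k t eta k *: (A *m x k.+1) - r_k A b t eta x k) ->
  lyap k - (lyap k.+1 + (eta - rho) * t k.+1 * gap (x k) + (1 - eta) / 2 * t k.+1 * incr k.+1)
  = (t k ^+ 2 - t k.+1 ^+ 2 + rho * t k.+1) * gap (x k)
    + (1 - eta) / 2 * (t k.+1 - 1) * incr k.+1
    + t k.+1 ^+ 2 / (2 * delta) * dot (lam k.+1 - extrap t lam k) (lam k.+1 - extrap t lam k)
    + t k.+1 ^+ 2 * beta / 2
      * (eta / t k.+1 * (1 - eta / t k.+1) * dot (A *m x k - b) (A *m x k - b)
         + (eta / t k.+1) ^+ 2 * dot (c_k t eta k *: (A *m x k.+1) - r_k A b t eta x k)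
                                     (c_k t eta k *: (A *m x k.+1) - r_k A b t eta x k))
    + t k.+1 ^+ 2 * (1 - eta / t k.+1) * prox_slack k (x k)
    + eta * t k.+1 * prox_slack k xs.
Proof.
move=> t0 eta0 gamma0 delta0 lam_upd.
rewrite /lyap /incr /energy /Mnorm2 /prox_slack /sub_lin /gap /= lam_upd.
rewrite /p_k /r_k /extrap /c_k /alpha_k ?mulmxDr ?mulmxN -?scalemxAr xs_feas.
move: (t k) (t k.+1) t0 => s tau t0.
move: (x k.-1) (x k) (x k.+1) (lam k.-1) (lam k) (A *m x k) (A *m x k.+1)
  => xm x0 x1 lm l0 a0 a1.
dot_expand.
(* [dot_sort] with a fixed orientation: the generic tactic is slow on a goal this size. *)
rewrite ?(dotC x0 xm) ?(dotC x1 xm) ?(dotC xs xm) ?(dotC x1 x0) ?(dotC xs x0) ?(dotC xs x1).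
rewrite ?(dotC l0 lm) ?(dotC ls lm) ?(dotC b lm) ?(dotC a0 lm) ?(dotC a1 lm)
  ?(dotC ls l0) ?(dotC b l0) ?(dotC a0 l0) ?(dotC a1 l0)
  ?(dotC b ls) ?(dotC a0 ls) ?(dotC a1 ls) ?(dotC a0 b) ?(dotC a1 b) ?(dotC a1 a0).
by field; rewrite t0 eta0 gamma0 delta0.
Qed.

End Lyapunov.

Lemma dot_convex_rec_bounded (R : realType) (p : nat) (u v : nat -> 'cV[R]_p)
    (th : nat -> R) (K : R) :
  (forall k, (1 <= k)%N -> 0 <= th k <= 1) ->
  (forall k, (1 <= k)%N -> dot (v k) (v k) <= K) ->
  (forall k, (1 <= k)%N -> u k.+1 = th k *: u k + (1 - th k) *: v k) ->
  forall k, (1 <= k)%N -> dot (u k) (u k) <= Num.max (dot (u 1%N) (u 1%N)) K.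
Proof.
move=> th01 v_le u_rec; elim=> // -[_ _|k IH _]; first by rewrite le_max lexx.
have [th0 th1] := andP (th01 k.+1 isT).
rewrite u_rec //; apply: le_trans (dot_convex _ _ (th01 k.+1 isT)) _.
have vK : dot (v k.+1) (v k.+1) <= Num.max (dot (u 1%N) (u 1%N)) K.
  by rewrite le_max v_le ?orbT.
have := IH isT; have := ler_wpM2l th0 (IH isT).
have := ler_wpM2l (_ : 0 <= 1 - th k.+1) vK; rewrite subr_ge0 => /(_ th1).
lra.
Qed.


Lemma is_cvg_sum_ge0_bounded (R : realType) (a : nat -> R) (M : R) :
  (forall k, (1 <= k)%N -> 0 <= a k) -> (forall N, \sum_(1 <= k < N) a k <= M) ->
  cvg ((fun N : nat => \sum_(1 <= k < N) a k) @ \oo).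
Proof.
move=> a_ge0 a_le; apply: nondecreasing_is_cvgn; last by exists M => _ [N _ <-].
apply/nondecreasing_seqP => -[|N]; first by rewrite !big_geq.
by rewrite [X in _ <= X]big_nat_recr //= lerDl a_ge0.
Qed.

Section Convergence.
Variables (R : realType) (m n : nat) (f : 'cV[R]_n -> R) (gf : 'cV[R]_n -> 'cV[R]_n)
  (A : 'M[R]_(m, n)) (b : 'cV[R]_m) (t : nat -> R) (rho eta gamma delta beta : R)
  (x : nat -> 'cV[R]_n) (lam : nat -> 'cV[R]_m) (xs : 'cV[R]_n) (ls : 'cV[R]_m).
Hypotheses (f_cvx : convex_fn f) (f_grad : is_gradient f gf)
  (t_mono : forall k, (1 <= k)%N -> t k <= t k.+1) (t1 : t 1%N = 1)
  (t_rho : forall k, (1 <= k)%N -> t k.+1 ^+ 2 - t k ^+ 2 <= rho * t k.+1)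
  (rho_gt0 : 0 < rho) (rho_le_eta : rho <= eta) (eta_le1 : eta <= 1)
  (gamma_gt0 : 0 < gamma) (delta_gt0 : 0 < delta) (beta_ge0 : 0 <= beta)
  (x0 : x 0%N = x 1%N) (lam0 : lam 0%N = lam 1%N)
  (x_prox : forall k, (1 <= k)%N -> prox_ineq f A b t eta gamma delta beta x lam k)
  (lam_upd : forall k, (1 <= k)%N ->
     lam k.+1 = extrap t lam k + delta *: (c_k t eta k *: (A *m x k.+1) - r_k A b t eta x k))
  (xs_feas : A *m xs = b) (kkt : gf xs + A^T *m ls = 0).

Local Notation gap := (gap f A b beta xs ls).
Local Notation lyap := (lyap f A b t eta gamma delta beta x lam xs ls).
Local Notation incr := (incr gamma delta x lam).
Local Notation Mnorm2 := (Mnorm2 gamma delta).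

Lemma t_ge1 k : (1 <= k)%N -> 1 <= t k.
Proof.
elim: k => // -[_ _|k IH _]; first by rewrite t1.
exact: le_trans (IH isT) (t_mono _).
Qed.

Lemma t_gt0 k : (1 <= k)%N -> 0 < t k.
Proof. by move/t_ge1; apply: lt_le_trans. Qed.

Lemma eta_gt0 : 0 < eta.
Proof. exact: lt_le_trans rho_le_eta. Qed.

Lemma f_ge_dual y : f xs - dot ls (A *m y - b) <= f y.
Proof.
have := convex_grad_ineq f_grad xs y f_cvx.
have -> : gf xs = - (A^T *m ls) by apply/eqP; rewrite -addr_eq0 kkt.
by rewrite dotNl -dot_mulmx mulmxBr xs_feas.
Qed.

Lemma gap_ge0 y : 0 <= gap y.
Proof.
have : 0 <= beta / 2 * dot (A *m y - b) (A *m y - b) by rewrite !mulr_ge0 ?dot_ge0.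
by have := f_ge_dual y; rewrite /gap; lra.
Qed.

Definition dissip k := (eta - rho) * t k.+1 * gap (x k) + (1 - eta) / 2 * t k.+1 * incr k.+1.

Lemma gap_term_ge0 k : 0 <= (eta - rho) * t k.+1 * gap (x k).
Proof. by rewrite !mulr_ge0 ?gap_ge0 ?subr_ge0 // ltW // t_gt0. Qed.

Lemma incr_term_ge0 k : 0 <= (1 - eta) * t k.+1 * incr k.+1.
Proof. by rewrite !mulr_ge0 ?Mnorm2_ge0 ?subr_ge0 // ltW // t_gt0. Qed.

Lemma dissip_ge0 k : 0 <= dissip k.
Proof. by rewrite /dissip; have := gap_term_ge0 k; have := incr_term_ge0 k; lra. Qed.

Lemma lyap_decrease k : (1 <= k)%N -> lyap k.+1 + dissip k <= lyap k.
Proof.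
move=> k1; have tk := t_ge1 k1; have tk1 := t_ge1 (k := k.+1) isT.
have rho_k := t_rho k1; have e1 := eta_le1; have e0 := eta_gt0.
have slack y : 0 <= prox_slack f A b t eta gamma delta beta x lam k y.
  by rewrite subr_ge0; exact: x_prox.
have th0 : 0 <= 1 - eta / t k.+1 by rewrite subr_ge0 ler_pdivrMr ?mul1r; lra.
have t0 : t k.+1 != 0 by rewrite gt_eqF // (lt_le_trans ltr01 tk1).
rewrite addrA -subr_ge0 (lyap_identity _ rho _ _ xs_feas t0 (lt0r_neq0 e0) (lt0r_neq0 gamma_gt0)
  (lt0r_neq0 delta_gt0) (lam_upd k1)).
have b2 : 0 <= beta / 2 by rewrite divr_ge0.
repeat apply: addr_ge0; rewrite ?mulr_ge0 ?divr_ge0 ?sqr_ge0 ?dot_ge0 ?gap_ge0 ?Mnorm2_ge0 //;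
  try lra.
- by rewrite invr_ge0 mulr_ge0 // ltW.
- by rewrite addr_ge0 // !mulr_ge0 ?dot_ge0 ?sqr_ge0 ?invr_ge0 //; lra.
Qed.

Local Notation E1 := (lyap 1%N).

Definition mom_x k := eta *: (x k - xs) + (t k - 1) *: (x k - x k.-1).
Definition mom_l k := eta *: (lam k - ls) + (t k - 1) *: (lam k - lam k.-1).
Definition dist k := Mnorm2 (x k - xs) (lam k - ls).

Lemma lyapE k :
  lyap k = t k ^+ 2 * gap (x k) + 1 / 2 * Mnorm2 (mom_x k) (mom_l k) + eta * (1 - eta) / 2 * dist k.
Proof. by []. Qed.

Lemma lyap_ge k : t k ^+ 2 * gap (x k) <= lyap k /\ Mnorm2 (mom_x k) (mom_l k) <= 2 * lyap k.
Proof.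
have := gap_ge0 (x k); have := Mnorm2_ge0 gamma_gt0 delta_gt0 (mom_x k) (mom_l k).
have := Mnorm2_ge0 gamma_gt0 delta_gt0 (x k - xs) (lam k - ls).
have : 0 <= t k ^+ 2 by exact: sqr_ge0.
have : 0 <= eta * (1 - eta) by rewrite mulr_ge0 ?subr_ge0 // ltW ?eta_gt0.
rewrite lyapE /dist; nra.
Qed.

Lemma lyap_ge0 k : 0 <= lyap k.
Proof.
have [+ _] := lyap_ge k; have : 0 <= t k ^+ 2 * gap (x k) by rewrite mulr_ge0 ?sqr_ge0 ?gap_ge0.
exact: le_trans.
Qed.

Lemma lyap_telescope N : (1 <= N)%N -> lyap N + \sum_(1 <= k < N) dissip k <= E1.
Proof.
elim: N => // -[_ _|N IH _]; first by rewrite big_geq // addr0.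
rewrite big_nat_recr //=; have := lyap_decrease (isT : (1 <= N.+1)%N); have := IH isT.
lra.
Qed.

Lemma sum_dissip_le N : \sum_(1 <= k < N) dissip k <= E1.
Proof.
case: N => [|N]; first by rewrite big_geq // lyap_ge0.
by have := lyap_telescope (isT : (1 <= N.+1)%N); have := lyap_ge0 N.+1; lra.
Qed.

Lemma lyap_le1 k : (1 <= k)%N -> lyap k <= E1.
Proof.
move=> k1; have := lyap_telescope k1.
have : 0 <= \sum_(1 <= i < k) dissip i.
  by rewrite sumr_ge0 // => i _; exact: dissip_ge0.
lra.
Qed.

Lemma lyap1E : E1 = augLag f A b beta (x 1%N) ls - augLag f A b beta xs ls
   + eta / (2 * gamma) * enorm (x 1%N - xs) ^+ 2 + eta / (2 * delta) * enorm (lam 1%N - ls) ^+ 2.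
Proof.
rewrite augLag_gap // /lyap /energy /Mnorm2 /= x0 lam0 t1 !enorm_sqr !subrr !scale0r !addr0.
by rewrite !dotZl !dotZr; field; rewrite !gt_eqF.
Qed.

Lemma gap_rate k : (1 <= k)%N -> gap (x k) <= E1 / t k ^+ 2.
Proof.
move=> k1; have [+ _] := lyap_ge k; have := lyap_le1 k1.
by rewrite ler_pdivlMr ?exprn_gt0 ?t_gt0 // mulrC; lra.
Qed.

Lemma dist_recursion k :
  (t k.+1 - 1) * dist k + Mnorm2 (mom_x k.+1) (mom_l k.+1) / eta
  - (t k.+1 - 1 + eta) * dist k.+1 = (t k.+1 - 1) * (t k.+1 - 1 + eta) * incr k.+1 / eta.
Proof.
rewrite /dist /incr /mom_x /mom_l /Mnorm2 /=.
move: (t k.+1) (x k) (x k.+1) (lam k) (lam k.+1) => s xk xk1 lk lk1.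
by dot_expand; dot_sort; field; rewrite !gt_eqF ?eta_gt0.
Qed.

Lemma dist_bound k : (1 <= k)%N -> dist k <= 2 * E1 / eta ^+ 2.
Proof.
set B := 2 * E1 / eta ^+ 2; have e0 := eta_gt0.
have mom_le j : (1 <= j)%N -> Mnorm2 (mom_x j) (mom_l j) / eta <= eta * B.
  move=> j1; have [_ mom_le] := lyap_ge j; have := lyap_le1 j1.
  rewrite ler_pdivrMr // /B; have -> : eta * (2 * E1 / eta ^+ 2) * eta = 2 * E1.
    by field; rewrite gt_eqF.
  lra.
elim: k => // -[_ _|k IH _].
  have := mom_le 1%N isT.
  rewrite /mom_x /mom_l t1 x0 lam0 !subrr !scale0r !addr0 Mnorm2Z -/(dist 1%N).
  have -> : eta ^+ 2 * dist 1%N / eta = eta * dist 1%N by field; rewrite gt_eqF.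
  by rewrite ler_pM2l.
have tk := t_ge1 (k := k.+2) isT; have := dist_recursion k.+1.
have c0 : 0 <= t k.+2 - 1 by rewrite subr_ge0.
have ce0 : 0 < t k.+2 - 1 + eta by rewrite ltr_wpDl.
have incr0 : 0 <= (t k.+2 - 1) * (t k.+2 - 1 + eta) * incr k.+2 / eta.
  by rewrite divr_ge0 ?mulr_ge0 ?Mnorm2_ge0 // ?ltW.
have := ler_wpM2l c0 (IH isT); have := mom_le k.+2 isT => momB distB recE.
rewrite -(ler_pM2l ce0); lra.
Qed.

Lemma iterates_bounded : exists B, forall k, enorm (x k) <= B /\ enorm (lam k) <= B.
Proof.
set D := 2 * E1 / eta ^+ 2.
have D0 : 0 <= D by rewrite divr_ge0 ?sqr_ge0 // mulr_ge0 // lyap_ge0.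
exists (1 + 2 * (gamma * D) + 2 * dot xs xs + 2 * (delta * D) + 2 * dot ls ls) => k.
have [j j1 [-> ->]] : exists2 j, (1 <= j)%N & x k = x j /\ lam k = lam j.
  by case: k => [|k]; [exists 1%N | exists k.+1].
have := ler_wpM2l (ltW gamma_gt0) (dist_bound j1).
have := ler_wpM2l (ltW delta_gt0) (dist_bound j1).
have := dotl_le_Mnorm2 gamma_gt0 delta_gt0 (x j - xs) (lam j - ls).
have := dotr_le_Mnorm2 gamma_gt0 delta_gt0 (x j - xs) (lam j - ls).
have := dot_le_dotB (x j) xs; have := dot_le_dotB (lam j) ls.
have := enorm_le1D (x j); have := enorm_le1D (lam j).
have := dot_ge0 xs; have := dot_ge0 ls.
have := mulr_ge0 (ltW gamma_gt0) D0; have := mulr_ge0 (ltW delta_gt0) D0.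
rewrite /dist -/D; split; lra.
Qed.

Lemma incr_sqr_le k : (1 <= k)%N -> (t k - 1) ^+ 2 * incr k <= 8 * E1.
Proof.
move=> k1; rewrite /incr -Mnorm2Z.
have -> : (t k - 1) *: (x k - x k.-1) = mom_x k - eta *: (x k - xs).
  by rewrite /mom_x [eta *: _ + _]addrC addrK.
have -> : (t k - 1) *: (lam k - lam k.-1) = mom_l k - eta *: (lam k - ls).
  by rewrite /mom_l [eta *: _ + _]addrC addrK.
apply: le_trans (Mnorm2B_le gamma_gt0 delta_gt0 _ _ _ _) _; rewrite Mnorm2Z -/(dist k).
have [_ mom_le] := lyap_ge k; have := lyap_le1 k1.
have := ler_wpM2l (sqr_ge0 eta) (dist_bound k1).
have -> : eta ^+ 2 * (2 * E1 / eta ^+ 2) = 2 * E1 by field; rewrite gt_eqF ?eta_gt0.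
lra.
Qed.

Lemma incr_rate k : (1 <= k)%N -> 1 < t k ->
  Mnorm gamma delta (x k - x k.-1) (lam k - lam k.-1) <= 2 * Num.sqrt (2 * E1) / (t k - 1).
Proof.
move=> k1 tk.
have t0 : 0 < t k - 1 by rewrite subr_gt0.
rewrite -ler_sqr ?nnegrE ?sqrtr_ge0 ?divr_ge0 ?mulr_ge0 ?sqrtr_ge0 ?(ltW t0) //.
rewrite Mnorm_sqr // expr_div_n exprMn sqr_sqrtr ?mulr_ge0 ?lyap_ge0 //.
rewrite ler_pdivlMr ?exprn_gt0 // mulrC.
by have := incr_sqr_le k1; rewrite -/(incr k); lra.
Qed.

Definition resid k := A *m x k - b.
Definition psi k := mom_l k + (1 - eta) *: lam k.
Definition feas_seq k := t k ^+ 2 *: resid k - (eta / delta) *: psi k.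
Definition feas_weight k := (t k.+1 ^+ 2 - eta * t k.+1) / t k ^+ 2.

Lemma feas_seq_rec k : (1 <= k)%N -> feas_seq k.+1
  = feas_weight k *: feas_seq k + (1 - feas_weight k) *: (- (eta / delta) *: psi k).
Proof.
move=> k1; have tk := t_gt0 k1; have tk1 := t_gt0 (k := k.+1) isT.
rewrite /feas_seq /psi /mom_l /resid /feas_weight lam_upd //= /extrap /c_k /r_k /alpha_k.
by apply/matrixP => i j; rewrite !mxE; field; rewrite !gt_eqF ?eta_gt0.
Qed.

Lemma feas_weight_01 k : (1 <= k)%N -> 0 <= feas_weight k <= 1.
Proof.
move=> k1; have tk := t_gt0 k1; have tk1 := t_ge1 (k := k.+1) isT.
have := t_rho k1; have := ler_wpM2r (le_trans ler01 tk1) rho_le_eta; have := eta_le1.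
move=> e1 rho_eta rho_k; rewrite /feas_weight; apply/andP; split.
  apply: divr_ge0; last by rewrite exprn_ge0 // ltW.
  by rewrite expr2 -mulrBl; apply: mulr_ge0; lra.
by rewrite ler_pdivrMr ?exprn_gt0 // mul1r; lra.
Qed.

Lemma psi_bounded : exists K, forall k, (1 <= k)%N -> dot (psi k) (psi k) <= K.
Proof.
set D := 2 * E1 / eta ^+ 2.
exists (2 * (delta * (2 * E1)) + 2 * ((1 - eta) ^+ 2 * (2 * (delta * D) + 2 * dot ls ls))).
move=> k k1; apply: le_trans (dotDD_le _ _) _; rewrite dotZZ.
have mom_le : dot (mom_l k) (mom_l k) <= delta * (2 * E1).
  apply: le_trans (dotr_le_Mnorm2 gamma_gt0 delta_gt0 (mom_x k) _) _.
  have [_] := lyap_ge k; have := lyap_le1 k1.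
  by move=> ? ?; rewrite ler_pM2l //; lra.
have lam_le : dot (lam k) (lam k) <= 2 * (delta * D) + 2 * dot ls ls.
  have := dot_le_dotB (lam k) ls.
  have := dotr_le_Mnorm2 gamma_gt0 delta_gt0 (x k - xs) (lam k - ls).
  have := ler_wpM2l (ltW delta_gt0) (dist_bound k1); rewrite /dist -/D; lra.
have := ler_wpM2l (sqr_ge0 (1 - eta)) lam_le; lra.
Qed.

Lemma feasibility_rate : exists C, 0 < C /\ forall k, (1 <= k)%N -> enorm (resid k) <= C / t k ^+ 2.
Proof.
have [K psi_le] := psi_bounded.
set c := eta / delta; set K' := Num.max (dot (feas_seq 1%N) (feas_seq 1%N)) (c ^+ 2 * K).
have feas_le : forall k, (1 <= k)%N -> dot (feas_seq k) (feas_seq k) <= K'.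
  apply: (dot_convex_rec_bounded feas_weight_01 _ feas_seq_rec) => k k1.
  by rewrite dotZZ sqrrN ler_wpM2l ?sqr_ge0 ?psi_le.
have K0 : 0 <= K by apply: le_trans (psi_le 1%N isT); exact: dot_ge0.
have K'0 : 0 <= K' by rewrite le_max dot_ge0.
set Kr := 2 * K' + 2 * (c ^+ 2 * K).
have Kr0 : 0 <= Kr by rewrite /Kr; have := mulr_ge0 (sqr_ge0 c) K0; lra.
exists (Num.sqrt Kr + 1); split; first by rewrite ltr_pwDr ?sqrtr_ge0.
move=> k k1; have tk := exprn_gt0 2 (t_gt0 k1).
rewrite ler_pdivlMr // mulrC; apply: (@le_trans _ _ (Num.sqrt Kr)); last by rewrite lerDl.
rewrite -[t k ^+ 2]ger0_norm ?(ltW tk) // -enormZ /enorm ler_sqrt //.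
have -> : t k ^+ 2 *: resid k = feas_seq k + c *: psi k by rewrite /feas_seq subrK.
apply: le_trans (dotDD_le _ _) _; rewrite dotZZ.
have := feas_le k k1; have := ler_wpM2l (sqr_ge0 c) (psi_le k k1); rewrite /Kr; lra.
Qed.

Lemma objective_rate (C : R) :
  (forall k, (1 <= k)%N -> enorm (resid k) <= C / t k ^+ 2) ->
  forall k, (1 <= k)%N ->
  `|f (x k) - f xs| <= (E1 + enorm ls * C + beta * C ^+ 2 / 2) / t k ^+ 2.
Proof.
move=> resid_le k k1; have tk := exprn_gt0 2 (t_gt0 k1).
have := gap_rate k1; have := f_ge_dual (x k); rewrite /gap -/(resid k).
have := dot_le_enorm ls (resid k); have := dot_le_enorm (- ls) (resid k).
rewrite enormN dotNl.
have := ler_wpM2l (enorm_ge0 ls) (resid_le k k1).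
have : 0 <= beta / 2 * dot (resid k) (resid k) by rewrite !mulr_ge0 ?dot_ge0.
have : 0 <= beta * C ^+ 2 / 2 / t k ^+ 2.
  by apply: divr_ge0 (ltW tk); apply: divr_ge0 (mulr_ge0 beta_ge0 (sqr_ge0 C)) _.
rewrite !mulrDl ler_norml mulrA.
move: (E1) => e; lra.
Qed.

Lemma gap_sum_cvg : cvg ((fun N : nat => \sum_(1 <= k < N)
  (eta - rho) * t k.+1 * (augLag f A b beta (x k) ls - augLag f A b beta xs ls)) @ \oo).
Proof.
apply: (@is_cvg_sum_ge0_bounded _ _ E1) => [k _|N]; rewrite ?augLag_gap //.
  exact: gap_term_ge0.
apply: le_trans (sum_dissip_le N); apply: ler_sum => k _.
by rewrite augLag_gap // /dissip lerDl; have := incr_term_ge0 k; lra.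
Qed.

Lemma incr_sum_cvg : cvg ((fun N : nat => \sum_(1 <= k < N)
  (1 - eta) * t k.+1 * Mnorm gamma delta (x k.+1 - x k) (lam k.+1 - lam k) ^+ 2) @ \oo).
Proof.
apply: (@is_cvg_sum_ge0_bounded _ _ (2 * E1)) => [k _|N]; rewrite ?Mnorm_sqr //.
  exact: incr_term_ge0.
rewrite -ler_pdivrMl // mulr_sumr; apply: le_trans (sum_dissip_le N).
apply: ler_sum => k _; rewrite Mnorm_sqr // /dissip.
by have := gap_term_ge0 k; rewrite /incr /=; lra.
Qed.

Lemma convergence_rates :
  let Lg := augLag f A b beta in
  let E1 := Lg (x 1%N) ls - Lg xs ls
            + eta / (2 * gamma) * enorm (x 1%N - xs) ^+ 2
            + eta / (2 * delta) * enorm (lam 1%N - ls) ^+ 2 in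
  (cvg ((fun N : nat => \sum_(1 <= k < N)
           (eta - rho) * t k.+1 * (Lg (x k) ls - Lg xs ls)) @ \oo)
   /\ cvg ((fun N : nat => \sum_(1 <= k < N)
           (1 - eta) * t k.+1 * Mnorm gamma delta (x k.+1 - x k) (lam k.+1 - lam k) ^+ 2)
           @ \oo))
  /\ (forall k, (1 <= k)%N -> Lg (x k) ls - Lg xs ls <= E1 / t k ^+ 2)
  /\ (exists B : R, forall k, enorm (x k) <= B /\ enorm (lam k) <= B)
  /\ (forall k, (1 < k)%N -> 1 < t k ->
        Mnorm gamma delta (x k - x k.-1) (lam k - lam k.-1)
        <= 2 * Num.sqrt (2 * E1) / (t k - 1))
  /\ (exists C : R, 0 < C /\ forall k, (1 <= k)%N ->
        enorm (A *m x k - b) <= C / t k ^+ 2 /\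
        `|f (x k) - f xs| <= (E1 + enorm ls * C + beta * C ^+ 2 / 2) / t k ^+ 2).
Proof.
move=> Lg E1; rewrite {}/E1 {}/Lg -lyap1E.
have [C [C0 resid_le]] := feasibility_rate.
split; first by split; [exact: gap_sum_cvg | exact: incr_sum_cvg].
split; first by move=> k k1; rewrite augLag_gap //; exact: gap_rate.
split; first exact: iterates_bounded.
split; first by move=> k /ltnW; exact: incr_rate.
by exists C; split => // k k1; split; [exact: resid_le | exact: objective_rate].
Qed.

End Convergence.

Unset Implicit Arguments.

Theorem theorem4p1 (R : realType) (m n : nat)
  (f : 'cV[R]_n -> R) (gf : 'cV[R]_n -> 'cV[R]_n)
  (A : 'M[R]_(m, n)) (b : 'cV[R]_m)
  (t : nat -> R) (rho eta gamma delta beta : R)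
  (x : nat -> 'cV[R]_n) (lam : nat -> 'cV[R]_m)
  (xs : 'cV[R]_n) (ls : 'cV[R]_m) :
  (* f convex and C^1 with gradient gf *)
  convex_fn f -> is_gradient f gf -> continuous gf ->
  (* parameter sequence *)
  (forall k, (1 <= k)%N -> t k <= t k.+1) ->
  t 1%N = 1 ->
  (forall k, (2 < k)%N -> 1 < t k) ->
  t @ \oo --> +oo ->
  0 < rho <= 1 ->
  (forall k, (1 <= k)%N -> t k.+1 ^+ 2 - t k ^+ 2 <= rho * t k.+1) ->
  rho <= eta <= 1 -> 0 < gamma -> 0 < delta -> 0 <= beta ->
  (* the algorithm *)
  x 0%N = x 1%N -> lam 0%N = lam 1%N ->
  ((forall k, (1 <= k)%N -> forall y,
      objI f A b t eta gamma delta beta x lam k (x k.+1)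
      <= objI f A b t eta gamma delta beta x lam k y)
   \/
   (exists L : R, 0 < L /\
      (forall u v, enorm (gf u - gf v) <= L * enorm (u - v)) /\ gamma <= 1 / L /\
      (forall k, (1 <= k)%N -> forall y,
        objII gf A b t eta gamma delta beta x lam k (x k.+1)
        <= objII gf A b t eta gamma delta beta x lam k y))) ->
  (forall k, (1 <= k)%N ->
     lam k.+1 = extrap t lam k
                + delta *: (c_k t eta k *: (A *m x k.+1) - r_k A b t eta x k)) ->
  (* (xs, ls) in the KKT set *)
  A *m xs = b -> gf xs + A^T *m ls = 0 ->
  let Lg := augLag f A b beta in
  let E1 := Lg (x 1%N) ls - Lg xs ls
            + eta / (2 * gamma) * enorm (x 1%N - xs) ^+ 2
            + eta / (2 * delta) * enorm (lam 1%N - ls) ^+ 2 in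
  (* (i) *)
  (cvg ((fun N : nat => \sum_(1 <= k < N)
           (eta - rho) * t k.+1 * (Lg (x k) ls - Lg xs ls)) @ \oo)
   /\ cvg ((fun N : nat => \sum_(1 <= k < N)
           (1 - eta) * t k.+1 * Mnorm gamma delta (x k.+1 - x k) (lam k.+1 - lam k) ^+ 2)
           @ \oo))
  (* (ii) *)
  /\ (forall k, (1 <= k)%N -> Lg (x k) ls - Lg xs ls <= E1 / t k ^+ 2)
  (* (iii) *)
  /\ (exists B : R, forall k, enorm (x k) <= B /\ enorm (lam k) <= B)
  /\ (forall k, (1 < k)%N -> 1 < t k ->
        Mnorm gamma delta (x k - x k.-1) (lam k - lam k.-1)
        <= 2 * Num.sqrt (2 * E1) / (t k - 1))
  (* (iv) *)
  /\ (exists C : R, 0 < C /\ forall k, (1 <= k)%N ->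
        enorm (A *m x k - b) <= C / t k ^+ 2 /\
        `|f (x k) - f xs| <= (E1 + enorm ls * C + beta * C ^+ 2 / 2) / t k ^+ 2).
Proof.
move=> f_cvx f_grad _ t_mono t1 _ _ /andP [rho_gt0 _] t_rho /andP [rho_le_eta eta_le1]
  gamma_gt0 delta_gt0 beta_ge0 x0 lam0 x_step lam_upd xs_feas kkt.
have x_prox k : (1 <= k)%N -> prox_ineq f A b t eta gamma delta beta x lam k.
  case: x_step => [x_min | [L [L0 [gf_lip [gammaL x_min]]]]] k1.
    by apply: (prox_ineq_objI gamma_gt0 f_cvx); exact: x_min.
  by apply: (prox_ineq_objII gamma_gt0 f_cvx f_grad L0 gf_lip gammaL); exact: x_min.
exact: (convergence_rates f_cvx f_grad t_mono t1 t_rho rho_gt0 rho_le_eta eta_le1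
  gamma_gt0 delta_gt0 beta_ge0 x0 lam0 x_prox lam_upd xs_feas kkt).
Qed.
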